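(* Let $\Phi=\forall u_1\ldots\forall u_n\exists e_1(D_1)\ldots\exists e_m(D_m).\varphi$ be a DQBF, let $A$ be a set of arbiter variables with arbiter clauses $\varphi_A$, let $\tau$ be a (partial) assignment to $A$, and let $\rho\in[U]$. Then $\varphi\wedge\varphi_A\wedge\tau\wedge\rho$ and $\varphi^\rho\wedge\tau^\rho$ are equisatisfiable.
   Context: For a set $V$ of variables, $[V]$ is the set of assignments $V\to\{\textsc{true},\textsc{false}\}$; an assignment is identified with the term (conjunction) of the literals it makes true, $\neg\sigma$ denotes the clause consisting of the negations of these literals, and $\sigma|_W$ denotes restriction. A DQBF is $\Phi=\forall u_1\ldots\forall u_n\exists e_1(D_1)\ldots\exists e_m(D_m).\varphi$ with pairwise distinct variables, $U=\{u_i\}$, $E=\{e_j\}$, dependency sets $D(e_j)=D_j\subseteq U$, and $\varphi$ a CNF over $U\cup E$. Arbiter variables: for $e\in E$ and $\sigma\in[D(e)]$, $e^\sigma$ is a fresh propositional variable (different annotations give different variables); for a literal $\ell$ on $e$, $\ell^\sigma$ is the literal on $e^\sigma$ of the same polarity. For a set $A$ of arbiter variables, the arbiter clauses are $\varphi_A=\bigwedge_{e^\sigma\in A}\big((e^\sigma\vee\neg\sigma\vee\neg e)\wedge(\neg e^\sigma\vee\neg\sigma\vee e)\big)$. For a partial assignment $\tau$ of $A$ (viewed as a set of arbiter literals) and $\rho\in[U]$, let $\tau^\rho=\{\ell^\sigma\in\tau\mid \rho\models\sigma\}$. For $\rho\in[U]$, the instantiation of $\varphi$ by $\rho$ is the CNF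 $\varphi^\rho=\{\{x^{\rho|_{D(\mathit{var}(x))}}\mid x\in C,\ \mathit{var}(x)\in E\}\mid C\in\varphi,\ \text{no universal literal of } C \text{ is satisfied by }\rho\}$, whose variables $e^{\rho|_{D(e)}}$ are identified with the arbiter variables of the same name. *)

From mathcomp Require Import all_boot.
Set Implicit Arguments. Unset Strict Implicit. Unset Printing Implicit Defensive.

(* An assignment sigma in [D(e_j)] is encoded by the subset S of D(e_j) of
   universals it sets to true (so S \subset D j); AV j S is e_j^sigma. *)
Inductive var (n m : nat) : Type :=
  | UV of 'I_n
  | EV of 'I_m
  | AV of 'I_m & {set 'I_n}.

Definition arbname (n m : nat) := ('I_m * {set 'I_n})%type.

Definition lit n m := (var n m * bool)%type.
Definition clause n m := seq (lit n m).
Definition cnf n m := seq (clause n m).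

Definition sat_lit n m (f : var n m -> bool) (l : lit n m) : bool := f l.1 == l.2.
Definition sat_clause n m (f : var n m -> bool) (C : clause n m) : bool :=
  has (sat_lit f) C.
Definition sat_cnf n m (f : var n m -> bool) (F : cnf n m) : bool :=
  all (sat_clause f) F.
Definition satisfiable n m (F : cnf n m) : Prop := exists f, sat_cnf f F.

Definition is_UE n m (x : var n m) : bool :=
  match x with AV _ _ => false | _ => true end.
Definition cnf_over_UE n m (F : cnf n m) : bool :=
  all (fun C => all (fun l => is_UE l.1) C) F.

Definition neg_assign n m (D : 'I_m -> {set 'I_n}) (j : 'I_m) (S : {set 'I_n})
  : clause n m := [seq (UV m i, i \notin S) | i <- enum (D j)].

Definition arbiter_clauses n m (D : 'I_m -> {set 'I_n}) (A : {set arbname n m})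
  : cnf n m :=
  flatten [seq [:: (AV a.1 a.2, true) :: (EV n a.1, false) :: neg_assign D a.1 a.2;
                   (AV a.1 a.2, false) :: (EV n a.1, true) :: neg_assign D a.1 a.2]
          | a <- enum A].

Definition tau_cnf n m (tau : {ffun arbname n m -> option bool}) : cnf n m :=
  [seq [:: (AV a.1 a.2, odflt false (tau a))] | a <- enum [pred a | tau a != None]].

Definition rho_cnf n m (rho : {ffun 'I_n -> bool}) : cnf n m :=
  [seq [:: (UV m i, rho i)] | i <- enum 'I_n].

Definition models n m (D : 'I_m -> {set 'I_n}) (rho : {ffun 'I_n -> bool})
  (a : arbname n m) : bool := [forall i in D a.1, rho i == (i \in a.2)].

Definition tau_rho_cnf n m (D : 'I_m -> {set 'I_n}) (tau : {ffun arbname n m -> option bool})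
  (rho : {ffun 'I_n -> bool}) : cnf n m :=
  [seq [:: (AV a.1 a.2, odflt false (tau a))]
  | a <- enum [pred a | (tau a != None) && models D rho a]].

Definition restr n m (D : 'I_m -> {set 'I_n}) (rho : {ffun 'I_n -> bool}) (j : 'I_m)
  : {set 'I_n} := [set i in D j | rho i].

Definition univ_sat n m (rho : {ffun 'I_n -> bool}) (l : lit n m) : bool :=
  match l.1 with UV i => rho i == l.2 | _ => false end.

Definition inst_lits n m (D : 'I_m -> {set 'I_n}) (rho : {ffun 'I_n -> bool})
  (C : clause n m) : clause n m :=
  flatten [seq match l.1 with
               | EV j => [:: (AV j (restr D rho j), l.2)]
               | _ => [::] end | l <- C].

Definition instantiate n m (D : 'I_m -> {set 'I_n}) (rho : {ffun 'I_n -> bool})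
  (F : cnf n m) : cnf n m :=
  [seq inst_lits D rho C | C <- F & ~~ has (univ_sat rho) C].

From mathcomp Require Import all_boot.
Set Implicit Arguments. Unset Strict Implicit. Unset Printing Implicit Defensive.

(* Once the universals are fixed to rho, every universal literal is decided, and
   for sigma in [D(e)] we have rho |= sigma iff sigma = rho|_D(e). So the
   arbiter clauses of an e^sigma with rho |= sigma say exactly e^sigma = e,
   while those with rho |/= sigma are satisfied by their literals of ~sigma.
   A model of phi /\ phi_A /\ tau /\ rho thus gives a model of
   phi^rho /\ tau^rho by giving e^(rho|_D(e)) the value of e; conversely a
   model of phi^rho /\ tau^rho is extended by e := e^(rho|_D(e)), the
   arbiters compatible with rho copying e and all others following tau. *)

Lemma all_flatten (T : Type) (p : pred T) (ss : seq (seq T)) :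
  all p (flatten ss) = all (all p) ss.
Proof. by elim: ss => //= s ss IH; rewrite all_cat IH. Qed.

Lemma sat_cnf_cat n m (f : var n m -> bool) (F G : cnf n m) :
  sat_cnf f (F ++ G) = sat_cnf f F && sat_cnf f G.
Proof. exact: all_cat. Qed.

Lemma sat_arbiter_unit_clausesP n m (f : var n m -> bool) (P : pred (arbname n m))
    (val : arbname n m -> bool) :
  reflect (forall a, P a -> f (AV a.1 a.2) = val a)
          (sat_cnf f [seq [:: (AV a.1 a.2, val a)] | a <- enum P]).
Proof.
rewrite /sat_cnf all_map.
apply: (iffP allP) => H a; rewrite ?mem_enum => Pa.
  by have := H a; rewrite mem_enum /= /sat_clause /sat_lit /= orbF => /(_ Pa)/eqP.
by rewrite /= /sat_clause /sat_lit /= H // eqxx.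
Qed.

Lemma sat_tau_cnfP n m (f : var n m -> bool) (tau : {ffun arbname n m -> option bool}) :
  reflect (forall a b, tau a = Some b -> f (AV a.1 a.2) = b) (sat_cnf f (tau_cnf tau)).
Proof.
apply: (iffP (sat_arbiter_unit_clausesP _ _ _)) => H a /=.
  by move=> b Ht; rewrite H ?inE Ht.
by case Ht: (tau a) => [b|] // _; apply: H.
Qed.

Lemma sat_rho_cnfP n m (rho : {ffun 'I_n -> bool}) (f : var n m -> bool) :
  reflect (forall i, f (UV m i) = rho i) (sat_cnf f (rho_cnf m rho)).
Proof.
rewrite /sat_cnf all_map /sat_clause /sat_lit /=.
apply: (iffP allP) => [H i | H i _]; last by rewrite /= H eqxx.
by have /= := H i; rewrite mem_enum orbF => /(_ isT)/eqP.
Qed.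

Section Instantiation.

Variables (n m : nat) (D : 'I_m -> {set 'I_n}) (rho : {ffun 'I_n -> bool}).

Lemma models_subset_restr (j : 'I_m) (s : {set 'I_n}) :
  s \subset D j -> models D rho (j, s) = (s == restr D rho j).
Proof.
move=> sD; apply/forall_inP/eqP => [Hm | -> i Di]; last by rewrite inE Di.
apply/setP => i; rewrite inE; case Di: (i \in D j); first by rewrite (eqP (Hm i Di)).
by apply/negbTE; apply: contraFN Di; apply: (subsetP sD).
Qed.

Lemma sat_tau_rho_cnfP (f : var n m -> bool) (tau : {ffun arbname n m -> option bool}) :
  reflect (forall a b, tau a = Some b -> models D rho a -> f (AV a.1 a.2) = b)
          (sat_cnf f (tau_rho_cnf D tau rho)).
Proof.
apply: (iffP (sat_arbiter_unit_clausesP _ _ _)) => H a /=.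
  by move=> b Ht Hm; rewrite H ?inE Ht.
by case Ht: (tau a) => [b|] //= Hm; apply: H.
Qed.

Lemma sat_neg_assign (f : var n m -> bool) (j : 'I_m) (s : {set 'I_n}) :
  (forall i, f (UV m i) = rho i) ->
  has (sat_lit f) (neg_assign D j s) = ~~ models D rho (j, s).
Proof.
move=> f_rho; rewrite has_map; apply/hasP/forall_inPn => -[i].
  rewrite mem_enum /sat_lit /= f_rho => Di rho_i; exists i => //.
  by move: rho_i; case: (rho i); case: (i \in s).
move=> Di rho_i; exists i; rewrite ?mem_enum // /sat_lit /= f_rho.
by move: rho_i; case: (rho i); case: (i \in s).
Qed.

Lemma sat_arbiter_clausesP (f : var n m -> bool) (A : {set arbname n m}) :
  (forall i, f (UV m i) = rho i) ->
  reflect (forall a, a \in A -> models D rho a -> f (AV a.1 a.2) = f (EV n a.1))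
          (sat_cnf f (arbiter_clauses D A)).
Proof.
move=> f_rho; rewrite /sat_cnf /arbiter_clauses all_flatten all_map.
have sat_pair a :
    sat_clause f ((AV a.1 a.2, true) :: (EV n a.1, false) :: neg_assign D a.1 a.2)
    && sat_clause f ((AV a.1 a.2, false) :: (EV n a.1, true) :: neg_assign D a.1 a.2)
    = models D rho a ==> (f (AV a.1 a.2) == f (EV n a.1)).
  rewrite /sat_clause /sat_lit /= sat_neg_assign // -surjective_pairing.
  by case: models; case: (f (AV _ _)); case: (f (EV _ _)).
apply: (iffP allP) => H a.
  move=> aA Hm; have := H a; rewrite mem_enum => /(_ aA) /=.
  by rewrite andbT sat_pair Hm => /eqP.
rewrite mem_enum => aA /=; rewrite andbT sat_pair.
by apply/implyP => Hm; rewrite H.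
Qed.

Lemma sat_inst_lits (f g : var n m -> bool) (C : clause n m) :
  (forall i, f (UV m i) = rho i) ->
  (forall j, g (AV j (restr D rho j)) = f (EV n j)) ->
  all (fun l => is_UE l.1) C ->
  has (univ_sat rho) C || sat_clause g (inst_lits D rho C) = sat_clause f C.
Proof.
move=> f_rho g_e; elim: C => //= -[[i|j|//] b] C IH /IH;
  rewrite /sat_clause /inst_lits /= => <-; rewrite /univ_sat /sat_lit /= ?f_rho ?g_e.
  by rewrite orbA.
by rewrite orbCA.
Qed.

Lemma sat_instantiate (f g : var n m -> bool) (F : cnf n m) :
  cnf_over_UE F ->
  (forall i, f (UV m i) = rho i) ->
  (forall j, g (AV j (restr D rho j)) = f (EV n j)) ->
  sat_cnf g (instantiate D rho F) = sat_cnf f F.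
Proof.
move=> + f_rho g_e; elim: F => //= C F IH /andP[UE_C /IH {}IH].
rewrite -(sat_inst_lits f_rho g_e UE_C) -IH /instantiate /sat_cnf /=.
by case: has.
Qed.

Variables (phi : cnf n m) (A : {set arbname n m})
          (tau : {ffun arbname n m -> option bool}).
Hypotheses (phi_UE : cnf_over_UE phi) (A_sub : forall a, a \in A -> a.2 \subset D a.1)
           (tau_A : forall a, tau a != None -> a \in A).

Lemma tau_models_restr (a : arbname n m) (b : bool) :
  tau a = Some b -> models D rho a -> a.2 = restr D rho a.1.
Proof.
move: a => [j s] tau_b; have js_A : (j, s) \in A by apply: tau_A; rewrite tau_b.
by rewrite (models_subset_restr (A_sub js_A)) => /eqP.
Qed.

Lemma sat_instantiate_of_sat :
  satisfiable (phi ++ arbiter_clauses D A ++ tau_cnf tau ++ rho_cnf m rho) ->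
  satisfiable (instantiate D rho phi ++ tau_rho_cnf D tau rho).
Proof.
case=> f; rewrite !sat_cnf_cat.
move=> /and4P[f_phi f_arb /sat_tau_cnfP f_tau /sat_rho_cnfP f_rho].
move/(sat_arbiter_clausesP _ f_rho): f_arb => f_arb.
pose g x := if x is AV j s then if s == restr D rho j then f (EV n j) else f x else f x.
exists g; rewrite sat_cnf_cat (sat_instantiate phi_UE f_rho) ?f_phi /=; last first.
  by move=> j; rewrite /g eqxx.
apply/sat_tau_rho_cnfP => -[j s] b tau_b Hm.
have s_restr := tau_models_restr tau_b Hm; rewrite /= in s_restr.
rewrite /g s_restr eqxx -(f_tau _ _ tau_b) -s_restr (f_arb (j, s)) //.
by apply: tau_A; rewrite tau_b.
Qed.

Lemma sat_of_sat_instantiate :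
  satisfiable (instantiate D rho phi ++ tau_rho_cnf D tau rho) ->
  satisfiable (phi ++ arbiter_clauses D A ++ tau_cnf tau ++ rho_cnf m rho).
Proof.
case=> g; rewrite sat_cnf_cat => /andP[g_inst /sat_tau_rho_cnfP g_tau].
pose f x := match x with
  | UV i => rho i
  | EV j => g (AV j (restr D rho j))
  | AV j s => if models D rho (j, s) then g (AV j (restr D rho j))
              else odflt false (tau (j, s)) end.
have f_rho : forall i, f (UV m i) = rho i by [].
exists f; rewrite !sat_cnf_cat -(sat_instantiate (g := g) phi_UE f_rho) // g_inst /=.
apply/and3P; split; last exact/sat_rho_cnfP.
  by apply/sat_arbiter_clausesP => // -[j s] _ /= Hm; rewrite Hm.
apply/sat_tau_cnfP => -[j s] b tau_b /=; case: ifP => Hm; last by rewrite tau_b.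
by rewrite -(tau_models_restr tau_b Hm); apply: (g_tau (j, s)).
Qed.

End Instantiation.

Theorem lemma4 (n m : nat) (D : 'I_m -> {set 'I_n}) (phi : cnf n m)
  (A : {set arbname n m}) (tau : {ffun arbname n m -> option bool})
  (rho : {ffun 'I_n -> bool}) :
  cnf_over_UE phi ->
  (forall a, a \in A -> a.2 \subset D a.1) ->
  (forall a, tau a != None -> a \in A) ->
  (satisfiable (phi ++ arbiter_clauses D A ++ tau_cnf tau ++ rho_cnf m rho)
   <-> satisfiable (instantiate D rho phi ++ tau_rho_cnf D tau rho)).
Proof.
move=> phi_UE A_sub tau_A.
by split; [apply: sat_instantiate_of_sat | apply: sat_of_sat_instantiate].
Qed.
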